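(* Let $r_{\mathrm{free}}$ be the number of generators of the torsion-free part of the $\mathbb{Z}_2[[q]]$-module $H^*(C_{\mathrm{borel}},d_{\mathrm{borel}})$ and $r_{\mathrm{tor}}$ the number of generators of its torsion part. Then $$r_{\mathrm{free}}+2r_{\mathrm{tor}}=\dim_{\mathbb{Z}_2}H^*(C,d).$$
   Context: $M$ is a closed smooth manifold with an involution $\iota$, $f$ an $\iota$-invariant Morse function with $\iota$-invariant metric such that the gradient flows of $f$ and $f|M^{\mathrm{inv}}$ are Morse–Smale and there is a constant $i_{\mathrm{anti}}$ with $i_M(x)=i_{M^{\mathrm{inv}}}(x)+i_{\mathrm{anti}}$ for every $\iota$-invariant critical point $x$ ($M^{\mathrm{inv}}$ the fixed set, $i$ Morse indices). $(C,d)$ is the $\mathbb{Z}_2$ Morse cochain complex of $f$, $\iota_{\mathrm{morse}}:C\to C$ the chain map sending a critical point $x$ to $\iota(x)$. $C_{\mathrm{borel}}=C[[q]]=C\otimes\mathbb{Z}_2[[q]]$ with $q$ of degree $1$, and $d_{\mathrm{borel}}=d+(\iota_{\mathrm{morse}}-\mathrm{id})q$, extended $\mathbb{Z}_2[[q]]$-linearly. *)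

From HB Require Import structures.
From mathcomp Require Import all_boot all_order all_algebra.
Set Implicit Arguments. Unset Strict Implicit. Unset Printing Implicit Defensive.
Import Order.TTheory GRing.Theory Num.Theory.
Local Open Scope ring_scope.

(* The Morse cochain complex C has Z_2-basis the critical points 'I_n;
   a cochain is a row vector 'rV['F_2]_n, and d acts by right
   multiplication x |-> x *m D, so D i j = coefficient of j in d(i). *)

Definition morse_inv (n : nat) (iota : 'I_n -> 'I_n) : 'M['F_2]_n :=
  \matrix_(i, j) ((iota i == j)%:R : 'F_2).

Definition fps := nat -> 'F_2.
(* C_borel = C[[q]] = C (x) Z_2[[q]] : sequences of cochains (coefficients of q^m). *)
Definition pser (n : nat) := nat -> 'rV['F_2]_n.

Definition smul (n : nat) (a : fps) (s : pser n) : pser n :=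
  fun m => \sum_(i < m.+1) a i *: s (m - i)%N.

(* d_borel = d + (iota_morse - id) q, extended Z_2[[q]]-linearly. *)
Definition dborel (n : nat) (D : 'M['F_2]_n) (iota : 'I_n -> 'I_n) (s : pser n)
  : pser n :=
  fun m => s m *m D +
    (if m is m'.+1 then s m' *m (morse_inv iota - 1%:M) else 0).

Definition is_cocycle n D iota (s : pser n) : Prop :=
  forall m, dborel D iota s m = 0.
Definition is_coboundary n D iota (s : pser n) : Prop :=
  exists u : pser n, forall m, dborel D iota u m = s m.

Definition comb n rf rt (a : 'I_rf -> fps) (b : 'I_rt -> fps)
  (g : 'I_rf -> pser n) (t : 'I_rt -> pser n) : pser n :=
  fun m => \sum_(i < rf) smul (a i) (g i) m + \sum_(j < rt) smul (b j) (t j) m.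

Definition qdiv (k : nat) (b : fps) : Prop := forall i, (i < k)%N -> b i = 0.

(* The classes of g_1..g_rf, t_1..t_rt give an isomorphism of Z_2[[q]]-modules
   Z_2[[q]]^rf (+) (+)_j Z_2[[q]]/(q^(k j))  ~=  H^*(C_borel, d_borel),
   with every k j >= 1: rf generators of the free part and rt generators of
   the torsion part (cyclic decomposition). *)
Definition borel_decomp n (D : 'M['F_2]_n) (iota : 'I_n -> 'I_n) rf rt
  (g : 'I_rf -> pser n) (t : 'I_rt -> pser n) (k : 'I_rt -> nat) : Prop :=
  [/\ forall i, is_cocycle D iota (g i),
      forall j, is_cocycle D iota (t j),
      forall j, (0 < k j)%N,
      (* surjectivity onto cohomology *)
      forall z, is_cocycle D iota z ->
        exists a b, is_coboundary D iota (fun m => z m - comb a b g t m)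
    & (* kernel is exactly 0 (+) (+)_j q^(k j) Z_2[[q]] *)
      forall a b, is_coboundary D iota (comb a b g t) <->
        ((forall i m, a i m = 0) /\ (forall j, qdiv (k j) (b j)))].

Definition cohom_dim n (D : 'M['F_2]_n) : nat := (\rank (kermx D) - \rank D)%N.

From HB Require Import structures.
From mathcomp Require Import all_boot all_order all_algebra.
From mathcomp Require Import boolp functions.
Import GRing.Theory.
Local Open Scope ring_scope.
Set Implicit Arguments.
Unset Strict Implicit.
Unset Printing Implicit Defensive.

(* Reduction modulo q. The sequence 0 -> C[[q]] --q--> C[[q]] -> C -> 0 makes
   H^*(C,d) the sum of H/qH, of dimension rf + rt, and of the kernel of q on H,
   of dimension rt.  Concretely, choose u_j with d_borel u_j = q^(k_j) t_j; then
   the constant terms g_i(0), t_j(0), u_j(0) are d-cocycles whose classes form a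
   basis of H^*(C,d).  Both freeness and spanning are checked by dividing by q
   the d_borel-cocycles whose constant term vanishes. *)

Section CohomologyBasis.
Variables (F : fieldType) (n : nat) (D : 'M[F]_n).
Hypothesis hDD : D *m D = 0.

Lemma rank_cohomology_basis N (V : 'M[F]_(N, n)) :
  V *m D = 0 -> (kermx D <= V + D)%MS ->
  (forall c : 'rV_N, (c *m V <= D)%MS -> c = 0) ->
  N = (\rank (kermx D) - \rank D)%N.
Proof.
move=> VD kerVD Vfree.
have kerE : (kermx D == V + D)%MS.
  by apply/andP; split=> //; rewrite addsmx_sub !sub_kermx VD hDD !eqxx.
have capVD : (V :&: D)%MS = 0.
  apply/eqP/rowV0P => v; rewrite sub_capmx => /andP[/submxP[c ->] cVD].
  by rewrite (Vfree c cVD) mul0mx.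
have /eqP rankV : row_free V.
  rewrite -kermx_eq0; apply/rowV0P => c /sub_kermxP cV0.
  by apply: Vfree; rewrite cV0 sub0mx.
by rewrite (eqmx_rank kerE) mxrank_disjoint_sum // rankV addnK.
Qed.

Lemma card_cohomology_basis (I : finType) (v : I -> 'rV[F]_n) :
  (forall x, v x *m D = 0) ->
  (forall c w, \sum_x c x *: v x = w *m D -> forall x, c x = 0) ->
  (forall z, z *m D = 0 -> exists c w, z = \sum_x c x *: v x + w *m D) ->
  #|I| = (\rank (kermx D) - \rank D)%N.
Proof.
move=> vD vfree vspan.
pose V := \matrix_(i < #|I|) v (enum_val i).
have rowV i : row i V = v (enum_val i) by apply/rowP => j; rewrite !mxE.
have sumV c : \sum_x c x *: v x = (\row_i c (enum_val i)) *m V.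
  rewrite mulmx_sum_row (reindex _ (onW_bij _ (enum_val_bij I))).
  by apply: eq_bigr => i _; rewrite mxE rowV.
apply: (rank_cohomology_basis (V := V)).
- by apply/row_matrixP => i; rewrite row_mul rowV vD row0.
- apply/row_subP => i.
  have [|c [w ->]] := vspan (row i (kermx D)).
    by rewrite -row_mul mulmx_ker row0.
  by rewrite sumV addmx_sub_adds ?submxMl.
- move=> c /submxP[w cVw]; apply/rowP => i; rewrite mxE.
  have := vfree (fun x => c 0 (enum_rank x)) w; rewrite sumV.
  have -> : \row_i c 0 (enum_rank (enum_val i)) = c.
    by apply/rowP => j; rewrite mxE enum_valK.
  by move/(_ cVw (enum_val i)); rewrite enum_valK.
Qed.

End CohomologyBasis.

Section ShiftSeries.
Variable V : zmodType.
Implicit Types (s : nat -> V) (c : V).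

Definition serC c : nat -> V := fun m => if m is 0 then c else 0.
Definition mulq s : nat -> V := fun m => if m is m'.+1 then s m' else 0.
Definition divq s : nat -> V := fun m => s m.+1.

Lemma mulq_is_zmod_morphism : zmod_morphism mulq.
Proof. by move=> s s'; apply/funext => -[|m]; rewrite !fctE /= ?subr0. Qed.

HB.instance Definition _ :=
  GRing.isZmodMorphism.Build (nat -> V) (nat -> V) mulq mulq_is_zmod_morphism.

Lemma mulqK : cancel mulq divq. Proof. by []. Qed.

Lemma mulq_inj : injective mulq. Proof. exact: can_inj mulqK. Qed.

Lemma divqK s : s 0%N = 0 -> mulq (divq s) = s.
Proof. by move=> s0; apply/funext => -[]. Qed.

Lemma iter_mulqE k s m :
  iter k mulq s m = if (k <= m)%N then s (m - k)%N else 0.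
Proof.
elim: k m => [|k IHk] m; first by rewrite subn0.
by case: m => [|m] //=; rewrite IHk ltnS subSS.
Qed.

End ShiftSeries.
Arguments serC {V} c m.
Arguments mulq {V} s m.
Arguments divq {V} s m.

Lemma qdivE k (a : fps) : qdiv k a -> a = iter k mulq (iter k divq a).
Proof.
move=> ak; apply/funext => m; rewrite iter_mulqE.
case: leqP => [km|/ak //]; rewrite -[in LHS](subnK km).
by elim: k {ak km} (m - k)%N => [|k IHk] p; rewrite ?addn0 //= -addSnnS IHk.
Qed.

Section SeriesProduct.
Variable n : nat.
Implicit Types (a : fps) (s : pser n).

Lemma smul0E a s : smul a s 0%N = a 0%N *: s 0%N.
Proof. by rewrite /smul big_ord1. Qed.

Lemma smul_serC c s : smul (serC c) s = c *: s.
Proof.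
apply/funext => m; rewrite /smul big_ord_recl big1 ?addr0 ?subn0 // => i _.
by rewrite scale0r.
Qed.

Lemma smul0l s : smul 0 s = 0.
Proof. by apply/funext => m; rewrite /smul big1 // => i _; rewrite scale0r. Qed.

Lemma smul0r a : smul a (0 : pser n) = 0.
Proof. by apply/funext => m; rewrite /smul big1 // => i _; rewrite scaler0. Qed.

Lemma smulBl a a' s : smul (a - a') s = smul a s - smul a' s.
Proof.
apply/funext => m; rewrite !fctE /smul /= -sumrB.
by apply: eq_bigr => i _; rewrite scalerBl.
Qed.

Lemma smul_mulql a s : smul (mulq a) s = mulq (smul a s).
Proof.
apply/funext => -[|m]; rewrite /smul /=; first by rewrite big_ord1 scale0r.
by rewrite big_ord_recl scale0r add0r; apply: eq_bigr => i _; rewrite subSS.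
Qed.

Lemma smul_mulqr a s : smul a (mulq s) = mulq (smul a s).
Proof.
apply/funext => -[|m]; rewrite /smul /=; first by rewrite big_ord1 scaler0.
rewrite big_ord_recr /= subnn scaler0 addr0.
by apply: eq_bigr => i _; rewrite subSn // -ltnS.
Qed.

Lemma smul_iter_mulql k a s : smul (iter k mulq a) s = iter k mulq (smul a s).
Proof. by elim: k => //= k <-; rewrite smul_mulql. Qed.

Lemma smul_iter_mulqr k a s : smul a (iter k mulq s) = iter k mulq (smul a s).
Proof. by elim: k => //= k <-; rewrite smul_mulqr. Qed.

End SeriesProduct.

Lemma addmx_F2 m p (M : 'M['F_2]_(m, p)) : M + M = 0.
Proof. by apply/matrixP => i j; rewrite !mxE addrr_pchar2 // pchar_Fp. Qed.

Section BorelDifferential.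
Variables (n : nat) (D : 'M['F_2]_n) (iota : 'I_n -> 'I_n).
Local Notation dB := (dborel D iota).
Implicit Types (a : fps) (s : pser n).

Lemma dborel_is_zmod_morphism : zmod_morphism dB.
Proof.
move=> s s'; apply/funext => -[|m]; rewrite !fctE /dborel /= ?addr0 ?mulmxBl //.
by rewrite opprD addrACA.
Qed.

HB.instance Definition _ :=
  GRing.isZmodMorphism.Build (pser n) (pser n) dB dborel_is_zmod_morphism.

Lemma dborel0E s : dB s 0%N = s 0%N *m D.
Proof. by rewrite /dborel addr0. Qed.

Lemma dborel_mulq s : dB (mulq s) = mulq (dB s).
Proof. by apply/funext => -[|[|m]]; rewrite /dborel /= ?mul0mx ?addr0. Qed.

Lemma dborel_divq s : s 0%N = 0 -> dB (divq s) = divq (dB s).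
Proof. by move=> s0; rewrite -[in RHS](divqK s0) dborel_mulq. Qed.

Lemma dborel_smul a s : dB (smul a s) = smul a (dB s).
Proof.
apply/funext => -[|m]; rewrite /dborel /smul.
  by rewrite !big_ord1 !addr0 scalemxAl.
rewrite !mulmx_suml [in RHS]big_ord_recr /= subnn addr0 big_ord_recr /= subnn.
under [in RHS]eq_bigr => i _ do rewrite (subSn (ltnSE (ltn_ord i))) scalerDr.
rewrite big_split /= addrAC.
congr (_ + _ + _); last by rewrite scalemxAl.
  by apply: eq_bigr => i _; rewrite (subSn (ltnSE (ltn_ord i))) scalemxAl.
by apply: eq_bigr => i _; rewrite scalemxAl.
Qed.

Lemma is_cocycleP s : is_cocycle D iota s <-> dB s = 0.
Proof. by split=> [/funext | ds m]; rewrite ?ds. Qed.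

Lemma is_coboundaryP s : is_coboundary D iota s <-> exists u, dB u = s.
Proof. by split=> -[u du]; exists u; [exact/funext | move=> m; rewrite du]. Qed.

Hypotheses (hDD : D *m D = 0) (hinv : involutive iota)
  (hchain : morse_inv iota *m D = D *m morse_inv iota).

Lemma morse_inv_invol : morse_inv iota *m morse_inv iota = 1%:M.
Proof.
apply/matrixP=> i j; rewrite !mxE (bigD1 (iota i)) //= big1 ?addr0.
  by rewrite !mxE eqxx mul1r hinv.
by move=> l /negbTE il; rewrite !mxE eq_sym il mul0r.
Qed.

(* The cross terms D (iota - 1) and (iota - 1) D cancel in characteristic 2. *)
Lemma dborelK s : dB (dB s) = 0.
Proof.
set A := morse_inv iota - 1%:M.
have AA : A *m A = 0.
  by rewrite mulmxBl !mulmxBr morse_inv_invol mul1mx !mulmx1 opprB addmx_F2.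
have AD : A *m D = D *m A by rewrite mulmxBl mulmxBr mul1mx mulmx1 hchain.
apply/funext => -[|[|m]]; rewrite /dborel -/A /= ?addr0 ?mulmxDl.
all: rewrite -!mulmxA hDD mulmx0 //.
all: by rewrite AD ?AA ?mulmx0 ?addr0 add0r addmx_F2.
Qed.

End BorelDifferential.

Section Combinations.
Variables (n rf rt : nat) (g : 'I_rf -> pser n) (t : 'I_rt -> pser n).
Implicit Types (a : 'I_rf -> fps) (b : 'I_rt -> fps).

Lemma combE a b :
  comb a b g t = \sum_i smul (a i) (g i) + \sum_j smul (b j) (t j).
Proof. by apply/funext => m; rewrite fctE !fct_sumE. Qed.

Lemma comb0E a b :
  comb a b g t 0%N = \sum_i a i 0%N *: g i 0%N + \sum_j b j 0%N *: t j 0%N.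
Proof. by congr (_ + _); apply: eq_bigr => i _; rewrite smul0E. Qed.

Lemma combB a a' b b' : comb a b g t - comb a' b' g t =
  comb (fun i => a i - a' i) (fun j => b j - b' j) g t.
Proof.
rewrite !combE opprD addrACA -!sumrB.
by congr (_ + _); apply: eq_bigr => i _; rewrite smulBl.
Qed.

Lemma comb_mulq a b :
  mulq (comb a b g t) = comb (fun i => mulq (a i)) (fun j => mulq (b j)) g t.
Proof.
rewrite !combE raddfD !raddf_sum.
by congr (_ + _); apply: eq_bigr => i _; rewrite smul_mulql.
Qed.

Lemma dborel_comb D iota a b :
  (forall i, is_cocycle D iota (g i)) -> (forall j, is_cocycle D iota (t j)) ->
  dborel D iota (comb a b g t) = 0.
Proof.
move=> gD tD; rewrite combE raddfD !raddf_sum.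
rewrite !big1 ?addr0 // => i _ /=; rewrite dborel_smul.
  by have /is_cocycleP -> := tD i; rewrite smul0r.
by have /is_cocycleP -> := gD i; rewrite smul0r.
Qed.

End Combinations.

Section BorelDecomposition.
Variables (n : nat) (D : 'M['F_2]_n) (iota : 'I_n -> 'I_n).
Hypotheses (hDD : D *m D = 0) (hinv : involutive iota)
  (hchain : morse_inv iota *m D = D *m morse_inv iota).
Variables (rf rt : nat) (g : 'I_rf -> pser n) (t : 'I_rt -> pser n)
  (k : 'I_rt -> nat).
Hypotheses (g_cocycle : forall i, is_cocycle D iota (g i))
  (t_cocycle : forall j, is_cocycle D iota (t j))
  (k_gt0 : forall j, (0 < k j)%N)
  (comb_onto : forall z, is_cocycle D iota z ->
     exists a b, is_coboundary D iota (fun m => z m - comb a b g t m))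
  (comb_coboundaryP : forall a b, is_coboundary D iota (comb a b g t) <->
     ((forall i m, a i m = 0) /\ (forall j, qdiv (k j) (b j)))).
Local Notation dB := (dborel D iota).

Lemma cocycle_comb_decomp z :
  dB z = 0 -> exists a b w, z = comb a b g t + dB w.
Proof.
move=> /is_cocycleP /comb_onto[a [b /is_coboundaryP[w dw]]].
by exists a, b, w; apply/funext => m; rewrite addrfctE dw addrC subrK.
Qed.

Lemma comb_coboundary a b w : dB w = comb a b g t ->
  (forall i m, a i m = 0) /\ (forall j, qdiv (k j) (b j)).
Proof. by move=> dw; apply/comb_coboundaryP/is_coboundaryP; exists w. Qed.

Lemma comb_coef0_eq0 a b w : comb a b g t 0%N = w *m D ->
  (forall i, a i 0%N = 0) /\ (forall j, b j 0%N = 0).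
Proof.
(* [E] vanishes at q = 0, so [divq E] is a cocycle, equal to some [comb a' b']
   up to a coboundary; then [comb (a - q a') (b - q b')] is a coboundary. *)
move=> abw; pose E := comb a b g t - dB (serC w).
have E0 : E 0%N = 0 by rewrite /E addrfctE opprfctE /= dborel0E abw subrr.
have dE : dB (divq E) = 0.
  by rewrite dborel_divq // raddfB /= dborel_comb // dborelK // subrr.
have [a' [b' [v Edec]]] := cocycle_comb_decomp dE.
have [ha hb] : (forall i m, (a i - mulq (a' i)) m = 0) /\
               (forall j, qdiv (k j) (b j - mulq (b' j))).
  apply: (comb_coboundary (w := serC w + mulq v)).
  rewrite -combB -comb_mulq.
  have -> : comb a b g t = E + dB (serC w) by rewrite subrK.
  rewrite -(divqK E0) Edec (raddfD dB) (raddfD mulq) /= dborel_mulq.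
  by rewrite [RHS]addrAC (addrC (mulq (comb a' b' g t))) addrK addrC.
split=> [i | j]; first by have := ha i 0%N; rewrite addrfctE opprfctE subr0.
by have := hb j 0%N (k_gt0 j); rewrite addrfctE opprfctE subr0.
Qed.

Lemma torsion_coboundary j : exists u, dB u = iter (k j) mulq (t j).
Proof.
pose b j' : fps := if j' == j then iter (k j) mulq (serC 1) else 0.
have /is_coboundaryP[u du] : is_coboundary D iota (comb (fun=> 0) b g t).
  apply/comb_coboundaryP; split=> // j' m mk; rewrite /b.
  by case: eqP mk => // -> mk; rewrite iter_mulqE leqNgt mk.
exists u; rewrite du combE big1 => [|i _]; last exact: smul0l.
rewrite add0r (bigD1 j) //= big1 ?addr0 => [|j' /negbTE nj]; last first.
  by rewrite /b nj smul0l.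
by rewrite /b eqxx smul_iter_mulql smul_serC scale1r.
Qed.

Section TorsionLifts.
Variable u : 'I_rt -> pser n.
Hypothesis dborel_u : forall j, dB (u j) = iter (k j) mulq (t j).

Lemma torsion_lift_coef_eq0 a b (c : 'I_rt -> 'F_2) w :
  comb a b g t 0%N + \sum_j c j *: u j 0%N = w *m D -> forall j, c j = 0.
Proof.
(* [E] vanishes at q = 0 and d_borel E = sum_j c_j q^(k_j) t_j, so
   sum_j c_j q^(k_j - 1) t_j is a coboundary. *)
move=> abcw.
pose E := comb a b g t + \sum_j smul (serC (c j)) (u j) - dB (serC w).
have E0 : E 0%N = 0.
  rewrite /E addrfctE opprfctE addrfctE fct_sumE /= dborel0E -abcw.
  by under eq_bigr do rewrite smul0E; rewrite subrr.
pose x := comb (fun=> 0) (fun j => iter (k j).-1 mulq (serC (c j))) g t.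
have dE : dB E = mulq x.
  rewrite /E (raddfB dB) (raddfD dB) (raddf_sum dB) /=.
  rewrite dborel_comb // dborelK // subr0 add0r /x comb_mulq combE.
  rewrite [in RHS]big1 ?add0r => [|i _]; last by rewrite raddf0 smul0l.
  apply: eq_bigr => j _.
  rewrite dborel_smul dborel_u smul_iter_mulqr -smul_iter_mulql.
  by rewrite -iterS prednK.
have /comb_coboundary[_ cq] : dB (divq E) = x by rewrite dborel_divq // dE.
move=> j; have := cq j (k j).-1; rewrite iter_mulqE leqnn subnn.
by apply; rewrite ltn_predL.
Qed.

Definition cohom_basis (x : 'I_rf + 'I_rt + 'I_rt) : 'rV['F_2]_n :=
  match x with
  | inl (inl i) => g i 0%N
  | inl (inr j) => t j 0%N
  | inr j => u j 0%N
  end.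

Lemma sum_cohom_basis (c : 'I_rf + 'I_rt + 'I_rt -> 'F_2) :
  \sum_x c x *: cohom_basis x =
    \sum_i c (inl (inl i)) *: g i 0%N + \sum_j c (inl (inr j)) *: t j 0%N
    + \sum_j c (inr j) *: u j 0%N.
Proof. by rewrite !big_sumType. Qed.

Lemma cohom_basis_cocycle x : cohom_basis x *m D = 0.
Proof.
case: x => [[i|j]|j]; rewrite -(dborel0E D iota);
  [exact: g_cocycle | exact: t_cocycle |].
by rewrite dborel_u iter_mulqE leqNgt k_gt0.
Qed.

Lemma cohom_basis_free c w :
  \sum_x c x *: cohom_basis x = w *m D -> forall x, c x = 0.
Proof.
rewrite sum_cohom_basis => cw.
pose a i := serC (c (inl (inl i))); pose b j := serC (c (inl (inr j))).
have c_inr : forall j, c (inr j) = 0.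
  by apply: (torsion_lift_coef_eq0 (a := a) (b := b) (w := w)); rewrite comb0E.
have [c_inll c_inlr] : (forall i, a i 0%N = 0) /\ (forall j, b j 0%N = 0).
  apply: (comb_coef0_eq0 (w := w)); rewrite comb0E -cw.
  by rewrite [X in _ = _ + X]big1 ?addr0 // => j _; rewrite c_inr scale0r.
by case=> [[i|j]|j]; [exact: c_inll | exact: c_inlr | exact: c_inr].
Qed.

Lemma cohom_basis_span z : z *m D = 0 ->
  exists c w, z = \sum_x c x *: cohom_basis x + w *m D.
Proof.
move=> zD; have dz0 : dB (serC z) 0%N = 0 by rewrite dborel0E.
pose y := divq (dB (serC z)).
have dzy : dB (serC z) = mulq y by rewrite divqK.
have dy : dB y = 0.
  by apply: mulq_inj; rewrite (raddf0 mulq) -dborel_mulq -dzy dborelK.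
have [a [b [w ydec]]] := cocycle_comb_decomp dy.
have [a0 qb] : (forall i m, mulq (a i) m = 0) /\
               (forall j, qdiv (k j) (mulq (b j))).
  apply: (comb_coboundary (w := serC z - mulq w)).
  rewrite (raddfB dB) /= dborel_mulq dzy -(raddfB mulq) /= ydec addrK.
  exact: comb_mulq.
pose e j := iter (k j) divq (mulq (b j)).
pose s := serC z - mulq w - \sum_j smul (e j) (u j).
have ds : dB s = 0.
  rewrite /s (raddfB dB) (raddfB dB) (raddf_sum dB) /= dborel_mulq dzy.
  rewrite -(raddfB mulq) /= ydec addrK comb_mulq combE big1 ?add0r => [|i _].
    apply/eqP; rewrite subr_eq0; apply/eqP; apply: eq_bigr => j _.
    by rewrite dborel_smul dborel_u smul_iter_mulqr -smul_iter_mulql /e -qdivE.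
  have -> : mulq (a i) = 0 by apply/funext/a0.
  exact: smul0l.
have [a2 [b2 [v sdec]]] := cocycle_comb_decomp ds.
exists (fun x => match x with
  | inl (inl i) => a2 i 0%N | inl (inr j) => b2 j 0%N | inr j => e j 0%N end).
exists (v 0%N); rewrite sum_cohom_basis /=.
have /(congr1 (fun f => f 0%N)) := sdec.
rewrite /s !addrfctE !opprfctE fct_sumE /= comb0E dborel0E subr0.
under eq_bigr do rewrite smul0E.
by move/eqP; rewrite subr_eq => /eqP ->; rewrite addrAC.
Qed.

End TorsionLifts.

Lemma borel_rank_eq : (rf + 2 * rt)%N = cohom_dim D.
Proof.
have [u dborel_u] := choice torsion_coboundary.
have -> : (rf + 2 * rt)%N = #|{: 'I_rf + 'I_rt + 'I_rt}|.
  by rewrite !card_sum !card_ord mul2n -addnn addnA.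
apply: (card_cohomology_basis hDD (cohom_basis_cocycle dborel_u)).
  exact: cohom_basis_free dborel_u.
exact: cohom_basis_span dborel_u.
Qed.

End BorelDecomposition.

Theorem lemma2p10 (n : nat) (deg : 'I_n -> nat) (D : 'M['F_2]_n)
  (iota : 'I_n -> 'I_n)
  (hDD : D *m D = 0)
  (hdeg : forall i j, D i j != 0 -> deg j = (deg i).+1)
  (hinv : forall i, iota (iota i) = i)
  (hideg : forall i, deg (iota i) = deg i)
  (hchain : morse_inv iota *m D = D *m morse_inv iota)
  (rf rt : nat) (g : 'I_rf -> pser n) (t : 'I_rt -> pser n) (k : 'I_rt -> nat) :
  borel_decomp D iota g t k -> (rf + 2 * rt)%N = cohom_dim D.
Proof.
case=> g_cocycle t_cocycle k_gt0 comb_onto comb_coboundaryP.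
exact: (borel_rank_eq hDD hinv hchain g_cocycle t_cocycle k_gt0 comb_onto
  comb_coboundaryP).
Qed.
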